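(* Consider a generalised recombinator dynamics with rate $r\in(0,1]$ in which $g_1>0$, and let $x^*$ be a stationary state. Suppose that $v_{x^*}(a_d|\cdot)=u_{x^*}(a_d|\cdot)$ on $\Delta(\operatorname{supp}_{-d}(x^* ))$ for every $d$ and every trait $a_d$ with $x^*(a_d)=0$. Then, for every such $a_d$, the generalised partner dynamics of $a_d$ has a unique globally stable equilibrium.
   Context: Setting: $D=\{1,\dots,|D|\}$ finite, $|D|\ge2$; finite trait sets $A_d$; types $A=\prod_dA_d$, $a=(a_d,a_{-d})$, $a_{-d}\in A_{-d}=\prod_{d'\ne d}A_{d'}$. Payoff $u:A\times A\to\mathbb{R}_{>0}$; for $x\in\Delta(A)$: $u_x(a)=\sum_{a'}x(a')u(a,a')$, $u_x=\sum_ax(a)u_x(a)$, $x(a_d)=\sum_{a_{-d}}x(a_d,a_{-d})$, $x(a_{-d})=\sum_{a_d}x(a_d,a_{-d})$, trait payoff $u_x(a_d)=\frac1{x(a_d)}\sum_{a_{-d}}x(a_d,a_{-d})u_x(a_d,a_{-d})$; supports $\operatorname{supp}(x)$, $\operatorname{supp}_d(x)$, $\operatorname{supp}_{-d}(x)$ are the sets of types/traits/trait profiles with positive (marginal) frequency. A function $f:A\times\Delta(A)\to[0,1]$, $f(a|x)$, is regular if $\sum_af(a|x)=1$ for all $x$; its marginal function is $\varphi(a_d,x)=\frac1{x(a_d)}\sum_{a'_{-d}}f(a_d,a'_{-d}|x)$, and $\varphi$ is trait payoff increasing if $u_x(a_d)>u_x(\hat a_d)\Rightarrow\varphi(a_d,x)>\varphi(\hat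 a_d,x)$. Generalised recombinator dynamics: $\dot x(a)=(1-r)f_1(a|x)+rf_2(a|x)-x(a)$, where $f_1,f_2$ are non-negative, regular, with trait-payoff-increasing marginal functions; $f_1(a|x)=g_1(a|x)x(a)$ with $g_1$ differentiable and $g_1(a|x)>g_1(a'|x)\iff u_x(a)>u_x(a')$; and $f_2$ satisfies (i) differentiability, (ii) trait combination: $\prod_dx(a_d)>0\Rightarrow f_2(a|x)>0$, (iii) trait growth inertia: if $x(a_d)=0$ and $\partial f_2(a_d,a_{-d}|x)/\partial x(a')>0$ then $\prod_{d'\ne d}x(a_{d'})>0$ and $a'_d=a_d$. For $a_d$ with $x^*(a_d)=0$ and $a'_{-d}\in\operatorname{supp}_{-d}(x^* )$: $v_{x^*}(a_d|a'_{-d})=\frac{\partial f_2(a_d,a'_{-d}|x^* )/\partial x(a_d,a'_{-d})}{\prod_{d'\ne d}x^*(a'_{d'})}$. For $y\in\Delta(\operatorname{supp}_{-d}(x^* ))$: $u_{x^*}(a_d|y)=\sum_{a'_{-d}\in\operatorname{supp}_{-d}(x^* )}g_1(a_d,a'_{-d}|x^* )y(a'_{-d})$, $v_{x^*}(a_d|y)=\sum_{a'_{-d}}v_{x^*}(a_d|a'_{-d})y(a'_{-d})$, $U^r_{x^*}(a_d|y)=(1-r)u_{x^*}(a_d|y)+rv_{x^*}(a_d|y)$. The generalised partner dynamics of $a_d$ is the dynamics on $\Delta(\operatorname{supp}_{-d}(x^* ))$: $\dot y(a_{-d})=(1-r)g_1(a_d,a_{-d}|x^* )y(a_{-d})+r\big(\prod_{d'\ne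 d}x^*(a_{d'})\big)v_{x^*}(a_d|y)-y(a_{-d})U^r_{x^*}(a_d|y)$. It has a unique globally stable equilibrium $\eta$ if $y^t\to\eta$ as $t\to\infty$ from every initial condition. Stationary means $\dot x=0$. *)

From HB Require Import structures.
From mathcomp Require Import all_boot all_order all_algebra.
From mathcomp Require Import all_classical all_reals all_analysis.
Unset Printing Implicit Defensive.
Import Order.TTheory GRing.Theory Num.Theory.
Import numFieldNormedType.Exports.
Local Open Scope ring_scope.
Local Open Scope classical_set_scope.

(* Loci D = 'I_nD, trait sets A d (finite types); types Ty = prod_d A d.
   A population state x : Ty -> R; f(a|x) is written f a x. *)
Definition Ty {nD : nat} (A : 'I_nD -> finType) := {dffun forall d : 'I_nD, A d}.

Section Defs.
Context {R : realType} {nD : nat} {A : 'I_nD -> finType}.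
Local Notation Ty := (Ty A).

Definition simplex (x : Ty -> R) : Prop :=
  (forall a, 0 <= x a) /\ \sum_a x a = 1.

(* x in Delta(S) for a subset S of types (x only looked at on S) *)
Definition simplexOn (S : pred Ty) (x : Ty -> R) : Prop :=
  (forall a, S a -> 0 <= x a) /\ \sum_(a | S a) x a = 1.

Definition margT (x : Ty -> R) (d : 'I_nD) (ad : A d) : R :=
  \sum_(a : Ty | a d == ad) x a.

Definition sameoff (d : 'I_nD) (a a' : Ty) : bool :=
  [forall d' : 'I_nD, (d' != d) ==> (a d' == a' d')].

Definition margP (x : Ty -> R) (d : 'I_nD) (a : Ty) : R :=
  \sum_(a' : Ty | sameoff d a a') x a'.

Definition ux (u : Ty -> Ty -> R) (x : Ty -> R) (a : Ty) : R :=
  \sum_a' x a' * u a a'.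

Definition traitpay (u : Ty -> Ty -> R) (x : Ty -> R) (d : 'I_nD) (ad : A d) : R :=
  (margT x d ad)^-1 * \sum_(a : Ty | a d == ad) x a * ux u x a.

Definition margfun (f : Ty -> (Ty -> R) -> R) (x : Ty -> R) (d : 'I_nD) (ad : A d) : R :=
  (margT x d ad)^-1 * \sum_(a : Ty | a d == ad) f a x.

Definition regular_fun (f : Ty -> (Ty -> R) -> R) : Prop :=
  forall x, simplex x -> (forall a, 0 <= f a x <= 1) /\ \sum_a f a x = 1.

(* the marginal function of f is trait payoff increasing (where trait payoffs
   are defined, i.e. for traits with positive frequency) *)
Definition trait_payoff_increasing (u : Ty -> Ty -> R) (f : Ty -> (Ty -> R) -> R) : Prop :=
  forall x, simplex x -> forall (d : 'I_nD) (ad ad' : A d),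
    0 < margT x d ad -> 0 < margT x d ad' ->
    traitpay u x d ad > traitpay u x d ad' -> margfun f x d ad > margfun f x d ad'.

(* Frechet differentiability at x of F : R^A -> R (R^A identified with 'rV_#|Ty|) *)
Definition diffble_at (F : (Ty -> R) -> R) (x : Ty -> R) : Prop :=
  forall v : 'rV[R]_#|Ty|, (forall a, v ord0 (enum_rank a) = x a) ->
    differentiable (fun w : 'rV[R]_#|Ty| => F (fun a => w ord0 (enum_rank a))) v.

Definition partial (F : (Ty -> R) -> R) (x : Ty -> R) (a' : Ty) : R :=
  derive1 (fun t : R => F (fun b => x b + t * (b == a')%:R)) 0.

Definition f1_of (g1 : Ty -> (Ty -> R) -> R) : Ty -> (Ty -> R) -> R :=
  fun a x => g1 a x * x a.

Definition f1_cond (u : Ty -> Ty -> R) (g1 : Ty -> (Ty -> R) -> R) : Prop :=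
  [/\ regular_fun (f1_of g1), trait_payoff_increasing u (f1_of g1),
      (forall a x, simplex x -> diffble_at (g1 a) x) &
      (forall x, simplex x -> forall a a', g1 a x > g1 a' x <-> ux u x a > ux u x a')].

Definition f2_cond (u : Ty -> Ty -> R) (f2 : Ty -> (Ty -> R) -> R) : Prop :=
  [/\ regular_fun f2, trait_payoff_increasing u f2,
      (forall a x, simplex x -> diffble_at (f2 a) x),
      (forall x, simplex x -> forall a : Ty,
          0 < \prod_(d : 'I_nD) margT x d (a d) -> 0 < f2 a x) &
      (forall x, simplex x -> forall (d : 'I_nD) (a a' : Ty),
          margT x d (a d) = 0 -> 0 < partial (f2 a) x a' ->
          0 < \prod_(d' | d' != d) margT x d' (a d') /\ a' d = a d)].

Definition stationary (r : R) (g1 f2 : Ty -> (Ty -> R) -> R) (xs : Ty -> R) : Prop :=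
  simplex xs /\
  forall a, (1 - r) * f1_of g1 a xs + r * f2 a xs - xs a = 0.

(* ---- generalised partner dynamics of the trait ad at locus d ----
   A profile a_{-d} is represented by the type a = (ad, a_{-d}), i.e. by a type
   a with a d = ad; supp_{-d}(xs) then corresponds to the set partner_supp. *)
Definition partner_supp (xs : Ty -> R) (d : 'I_nD) (ad : A d) : pred Ty :=
  fun a => (a d == ad) && (0 < margP xs d a).

Definition prodoff (xs : Ty -> R) (d : 'I_nD) (a : Ty) : R :=
  \prod_(d' | d' != d) margT xs d' (a d').

Definition vpt (f2 : Ty -> (Ty -> R) -> R) (xs : Ty -> R) (d : 'I_nD) (a : Ty) : R :=
  partial (f2 a) xs a / prodoff xs d a.

Definition u_y (g1 : Ty -> (Ty -> R) -> R) (xs : Ty -> R) (d : 'I_nD) (ad : A d)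
  (y : Ty -> R) : R :=
  \sum_(a | partner_supp xs d ad a) g1 a xs * y a.

Definition v_y (f2 : Ty -> (Ty -> R) -> R) (xs : Ty -> R) (d : 'I_nD) (ad : A d)
  (y : Ty -> R) : R :=
  \sum_(a | partner_supp xs d ad a) vpt f2 xs d a * y a.

Definition U_y (r : R) (g1 f2 : Ty -> (Ty -> R) -> R) (xs : Ty -> R) (d : 'I_nD)
  (ad : A d) (y : Ty -> R) : R :=
  (1 - r) * u_y g1 xs d ad y + r * v_y f2 xs d ad y.

Definition partner_field (r : R) (g1 f2 : Ty -> (Ty -> R) -> R) (xs : Ty -> R)
  (d : 'I_nD) (ad : A d) (y : Ty -> R) (a : Ty) : R :=
  (1 - r) * g1 a xs * y a + r * prodoff xs d a * v_y f2 xs d ad y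
  - y a * U_y r g1 f2 xs d ad y.

Definition partner_solution (r : R) (g1 f2 : Ty -> (Ty -> R) -> R) (xs : Ty -> R)
  (d : 'I_nD) (ad : A d) (y : R -> Ty -> R) : Prop :=
  forall t : R, 0 <= t -> forall a, partner_supp xs d ad a ->
    is_derive t 1 (fun s => y s a) (partner_field r g1 f2 xs d ad (y t) a).

Definition unique_globally_stable (r : R) (g1 f2 : Ty -> (Ty -> R) -> R)
  (xs : Ty -> R) (d : 'I_nD) (ad : A d) : Prop :=
  exists eta : Ty -> R,
    [/\ simplexOn (partner_supp xs d ad) eta,
        (forall a, partner_supp xs d ad a -> partner_field r g1 f2 xs d ad eta a = 0) &
        (forall y : R -> Ty -> R,
           simplexOn (partner_supp xs d ad) (y 0) ->
           partner_solution r g1 f2 xs d ad y ->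
           forall a, partner_supp xs d ad a ->
             (y t a) @[t --> +oo] --> eta a)].

End Defs.

(* With v = u at the stationary state xs, the partner dynamics of a trait a_d is the
   projectivised linear flow
     y' = M y - (g . y) y,   M = (1 - r) diag g + r p g^T,
   where g = g1(. | xs) and p(a_{-d}) = prod_{d' <> d} xs(a_{d'}) on supp_{-d}(xs);
   stationarity and trait combination make p a positive probability vector there, so
   1^T M = g^T and the total mass is conserved.  The equilibrium is
   eta_a = r p_a lam / (lam - (1 - r) g_a), the Perron root lam being found by the
   intermediate value theorem.  For theta = y / eta, a
   suitably weighted variance of theta relative to its weighted mean is a Lyapunov function
   with exponential decay, so theta becomes constant and y converges to eta. *)

From HB Require Import structures.
From mathcomp Require Import all_boot all_order all_algebra.
From mathcomp Require Import all_classical all_reals all_analysis.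
From mathcomp Require Import ring lra.
Import Order.TTheory GRing.Theory Num.Theory.
Import numFieldNormedType.Exports.
Local Open Scope classical_set_scope.
Local Open Scope ring_scope.

(** * Calculus on [0, +oo) *)

Section RealDerive.
Context {R : realType}.

Lemma is_derive1_continuous (f : R -> R) (t d : R) :
  is_derive t 1 f d -> {for t, continuous f}.
Proof. by move=> [df _]; apply: differentiable_continuous; exact/derivable1_diffP. Qed.

(* Pointwise forms of the library's product rules, which are stated for lifted functions
   [f * g], [k \*: f] and do not unify with lambda terms. *)

Lemma is_derive_mulrl (k : R) {f : R -> R} {t df : R} :
  is_derive t 1 f df -> is_derive t 1 (fun s => k * f s) (k * df).
Proof. exact: is_deriveZ. Qed.

Lemma is_derive_mulr {f g : R -> R} {t df dg : R} :
  is_derive t 1 f df -> is_derive t 1 g dg ->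
  is_derive t 1 (fun s => f s * g s) (f t * dg + g t * df).
Proof. exact: is_deriveM. Qed.

Lemma is_derive_sqr {f : R -> R} {t df : R} :
  is_derive t 1 f df -> is_derive t 1 (fun s => f s ^+ 2) (2 * f t * df).
Proof.
move=> f_df; apply: is_derive_eq (is_derive_mulr f_df f_df) _.
by rewrite /=; ring.
Qed.

Lemma is_derive_invr {f : R -> R} {t df : R} :
  is_derive t 1 f df -> f t != 0 -> is_derive t 1 (fun s => (f s)^-1) (- df / f t ^+ 2).
Proof.
move=> f_df ft0; apply: is_derive_eq (is_deriveV ft0 f_df) _.
by change (- f t ^- 2 * df = - df / f t ^+ 2); rewrite mulNr mulrC mulNr.
Qed.

Lemma is_derive_expRM (k t : R) :
  is_derive t 1 (fun s => expR (k * s)) (k * expR (k * t)).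
Proof.
have kt : is_derive t 1 (fun s : R => k * s) (k * 1) by apply: is_derive_mulrl.
by have := is_derive1_comp (is_derive_expR (k * t)) kt; rewrite mulr1 mulrC.
Qed.

Lemma is_derive_sum_pred (I : finType) (P : pred I) (h : I -> R -> R) (dh : I -> R) (t : R) :
  (forall i, P i -> is_derive t 1 (h i) (dh i)) ->
  is_derive t 1 (fun s => \sum_(i | P i) h i s) (\sum_(i | P i) dh i).
Proof.
move=> hd; rewrite unlock /=; elim: (index_enum I) => [|i s ih] /=.
  exact: is_derive_cst.
by case: ifP => Pi; [exact: is_deriveD (hd i Pi) ih | exact: ih].
Qed.

Lemma continuous_bounded_cc (f : R -> R) (T : R) : 0 <= T ->
  (forall t : R, 0 <= t -> t <= T -> {for t, continuous f}) ->
  exists B, forall t : R, 0 <= t -> t <= T -> `|f t| <= B.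
Proof.
move=> T0 hc.
have cf : {within `[0, T], continuous f}.
  apply: continuous_in_subspaceT => x; rewrite inE /= in_itv /= => /andP[x0 xT].
  exact: hc.
have [c1 _ h1] := EVT_max T0 cf; have [c2 _ h2] := EVT_min T0 cf.
exists (`|f c1| + `|f c2|) => t t0 tT.
have tin : t \in `[0, T] by rewrite in_itv /= t0 tT.
have := h1 _ tin; have := h2 _ tin; rewrite ler_norml.
have := ler_norm (f c1); have := normr_ge0 (f c1); have := normr_ge0 (f c2).
have := ler_norm (- f c2); rewrite normrN => *.
apply/andP; split; lra.
Qed.

End RealDerive.

Section DeriveNonneg.
Context {R : realType}.
Variables f df : R -> R.
Hypothesis f_df : forall t : R, 0 <= t -> is_derive t 1 f (df t).

Let f_derivable (t : R) : t \in `]0, +oo[ -> derivable f t (1 : R).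
Proof. by rewrite in_itv /= andbT => /ltW t0; exact: (f_df _ t0).(ex_derive). Qed.

Let f_derive1 (t : R) : t \in `]0, +oo[ -> derive1 f t = df t.
Proof. by rewrite in_itv /= andbT => /ltW t0; rewrite derive1E (f_df _ t0).(derive_val). Qed.

Let f_continuous (T : R) : {within `[0, T], continuous f}.
Proof.
apply: continuous_in_subspaceT => t; rewrite inE /= in_itv /= => /andP[t0 _].
exact: is_derive1_continuous (f_df _ t0).
Qed.

Let f_continuousy : {within `[0, +oo[, continuous f}.
Proof.
apply: continuous_in_subspaceT => t; rewrite inE /= in_itv /= andbT => t0.
exact: is_derive1_continuous (f_df _ t0).
Qed.

Lemma ler0_is_derive_nincry : (forall t : R, 0 <= t -> df t <= 0) ->
  forall s t : R, 0 <= s -> s <= t -> f t <= f s.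
Proof.
move=> df_le0; apply: (ler0_derive1_nincry f_derivable _ f_continuousy) => t t0.
by rewrite f_derive1 // df_le0 // ltW; move: t0; rewrite in_itv /= andbT.
Qed.

Lemma is_derive0_cst_ge0 : (forall t : R, 0 <= t -> df t = 0) ->
  forall t : R, 0 <= t -> f t = f 0.
Proof.
move=> df0 t t0; apply/eqP; rewrite eq_le; apply/andP; split.
  by apply: ler0_is_derive_nincry => // s s0; rewrite df0.
apply: (ger0_derive1_ndecry f_derivable _ f_continuousy (lexx 0) t0) => s s0.
by rewrite f_derive1 // df0 // ltW; move: s0; rewrite in_itv /= andbT.
Qed.

Lemma ger0_is_derive_ndecr (T : R) : 0 <= T ->
  (forall t : R, 0 <= t -> t <= T -> 0 <= df t) -> f 0 <= f T.
Proof.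
move=> T0 df_ge0; apply: (ger0_derive1_ndecr _ _ (f_continuous T)) => // t.
  by rewrite in_itv /= => /andP[t0 _]; apply: f_derivable; rewrite in_itv /= t0.
rewrite in_itv /= => /andP[t0 tT]; rewrite f_derive1 ?in_itv /= ?t0 //.
by apply: df_ge0; apply: ltW.
Qed.

End DeriveNonneg.

Section ODEBounds.
Context {R : realType}.

Lemma is_derive_linear_neq0 (f h : R -> R) :
  (forall t : R, 0 <= t -> is_derive t 1 f (h t * f t)) ->
  (forall t : R, 0 <= t -> {for t, continuous h}) ->
  f 0 != 0 -> forall t : R, 0 <= t -> f t != 0.
Proof.
move=> f_df h_cont f0 t t0.
have [B hB] := continuous_bounded_cc h t t0 (fun s s0 _ => h_cont s s0).
pose K := 2 * B.
(* f^2 e^{K s} is nondecreasing on [0, t] since |h| <= B there. *)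
have : f 0 ^+ 2 * expR (K * 0) <= f t ^+ 2 * expR (K * t).
  apply: (@ger0_is_derive_ndecr _ (fun s => f s ^+ 2 * expR (K * s))
    (fun s => expR (K * s) * f s ^+ 2 * (K + 2 * h s))) => //.
    move=> s s0; apply: is_derive_eq.
      exact: is_derive_mulr (is_derive_sqr (f_df _ s0)) (is_derive_expRM K s).
    by rewrite /=; ring.
  move=> s s0 st; apply: mulr_ge0; first by rewrite mulr_ge0 ?expR_ge0 ?sqr_ge0.
  have := hB s s0 st; rewrite ler_norml /K => /andP[? ?]; lra.
rewrite mulr0 expR0 mulr1 => le_sqr; apply/eqP => ft0; move: le_sqr.
by rewrite ft0 expr0n mul0r leNgt lt_def sqr_ge0 sqrf_eq0 f0.
Qed.

Lemma is_derive_exp_decay (f df : R -> R) (a : R) :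
  (forall t : R, 0 <= t -> is_derive t 1 f (df t)) ->
  (forall t : R, 0 <= t -> df t <= - a * f t) ->
  forall t : R, 0 <= t -> f t * expR (a * t) <= f 0.
Proof.
move=> f_df df_le t t0.
have : f t * expR (a * t) <= f 0 * expR (a * 0).
  apply: (@ler0_is_derive_nincry _ (fun s => f s * expR (a * s))
    (fun s => expR (a * s) * (df s + a * f s))) => //.
    move=> s s0; apply: is_derive_eq; first exact: is_derive_mulr (f_df _ s0) (is_derive_expRM a s).
    by rewrite /=; ring.
  by move=> s s0; rewrite mulr_ge0_le0 ?expR_ge0 //; have := df_le s s0; lra.
by rewrite mulr0 expR0 mulr1.
Qed.

Lemma cvg0_sqr_expR_bounded (e : R -> R) (a C : R) : 0 < a ->
  (forall t : R, 0 <= t -> e t ^+ 2 * expR (a * t) <= C) -> e t @[t --> +oo] --> 0.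
Proof.
move=> a_gt0 e_le; apply/cvgr0Pnorm_le => eps eps_gt0.
near=> t.
have tM : `|C| / (a * eps ^+ 2) + 1 <= t by near: t; apply: nbhs_pinfty_ge; exact: num_real.
have aeps_gt0 : 0 < a * eps ^+ 2 by rewrite mulr_gt0 // exprn_gt0.
have t_ge : `|C| / (a * eps ^+ 2) <= t by apply: le_trans tM; rewrite lerDl.
have t_gt0 : 0 < t by apply: lt_le_trans tM; rewrite ltr_wpDl // divr_ge0 // ltW.
(* e^{a t} >= 1 + a t > a t turns the bound into e^2 <= C / (a t) <= eps^2. *)
have e2_le : e t ^+ 2 * (a * t) <= `|C|.
  apply: le_trans (le_trans (e_le t (ltW t_gt0)) (ler_norm C)).
  apply: ler_wpM2l; first exact: sqr_ge0.
  by apply: le_trans (expR_ge1Dx _); rewrite lerDr.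
have : e t ^+ 2 <= eps ^+ 2.
  rewrite -(ler_pM2r (mulr_gt0 a_gt0 t_gt0)) (le_trans e2_le) //.
  by move: t_ge; rewrite ler_pdivrMr // (_ : _ * (a * t) = t * (a * eps ^+ 2)) //; ring.
by move=> e2_le_eps2; rewrite ler_norml; apply/andP; split; nra.
Unshelve. all: end_near.
Qed.

End ODEBounds.

(** * The reduced partner dynamics *)

Section WeightedSums.
Context {R : realType} {I : finType} {S : pred I}.

Lemma sum_weighted_sqr_dev (w th : I -> R) (m : R) :
  \sum_(a | S a) w a = 1 ->
  \sum_(a | S a) w a * (th a - m) ^+ 2 =
  \sum_(a | S a) w a * th a ^+ 2 - 2 * m * \sum_(a | S a) w a * th a + m ^+ 2.
Proof.
move=> w1.
have -> : \sum_(a | S a) w a * (th a - m) ^+ 2 =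
    \sum_(a | S a) (w a * th a ^+ 2 - (2 * m) * (w a * th a) + m ^+ 2 * w a).
  by apply: eq_bigr => a _; ring.
rewrite big_split /= sumrB -2!mulr_sumr w1; ring.
Qed.

End WeightedSums.

Section ReducedDynamics.
Context {R : realType} {I : finType}.
Variables (S : pred I) (g p : I -> R) (r : R).
Hypotheses (r_gt0 : 0 < r) (r_le1 : r <= 1) (g_gt0 : forall a, S a -> 0 < g a)
  (p_gt0 : forall a, S a -> 0 < p a) (sum_p : \sum_(a | S a) p a = 1).

Definition payoff (y : I -> R) := \sum_(a | S a) g a * y a.

Definition reduced_field (y : I -> R) (a : I) :=
  (1 - r) * g a * y a + r * p a * payoff y - y a * payoff y.

Lemma sum_reduced_field y :
  \sum_(a | S a) reduced_field y a = payoff y * (1 - \sum_(a | S a) y a).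
Proof.
have -> : \sum_(a | S a) reduced_field y a =
    \sum_(a | S a) ((1 - r) * (g a * y a) + (r * payoff y) * p a - payoff y * y a).
  by apply: eq_bigr => a _; rewrite /reduced_field; ring.
rewrite sumrB big_split /= -!mulr_sumr sum_p -/(payoff y); ring.
Qed.

Definition kappa (lam : R) (a : I) := lam - (1 - r) * g a.

(* Solving [reduced_field eta a = 0] for [eta a] when [payoff eta = lam]. *)
Definition equilibrium (lam : R) (a : I) := r * p a * lam / kappa lam a.

Definition equilibrium_mass (lam : R) : R := \sum_(a | S a) equilibrium lam a.

Lemma sum_kappa_equilibrium lam : (forall a, S a -> 0 < kappa lam a) ->
  \sum_(a | S a) kappa lam a * equilibrium lam a = r * lam.
Proof.
move=> kappa_gt0; rewrite -[r * lam]mulr1 -sum_p mulr_sumr; apply: eq_bigr => a Sa.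
by rewrite /equilibrium mulrC divfK ?gt_eqF ?kappa_gt0 //; ring.
Qed.

(* The [amax] term alone makes the mass at least 1 at [l1]; at [l2], [(1 - r) l2 >= gmax]
   bounds every term by [p a], so the mass is at most 1. *)
Section PerronRoot.
Hypothesis r_lt1 : r < 1.
Variable amax : I.
Hypotheses (S_amax : S amax) (amax_max : forall a, S a -> (1 - r) * g a <= (1 - r) * g amax).
Let gmax : R := (1 - r) * g amax.
Let l1 : R := gmax + r * p amax * gmax.
Let l2 : R := l1 + gmax / (1 - r).

Let gmax_gt0 : 0 < gmax.
Proof. by rewrite mulr_gt0 ?subr_gt0 ?g_gt0. Qed.

Let kappa_gt0 lam a : gmax < lam -> S a -> 0 < kappa lam a.
Proof. by move=> lam_gt a_S; rewrite subr_gt0 (le_lt_trans (amax_max _ a_S)). Qed.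

Let equilibrium_mass_continuous x : gmax < x -> {for x, continuous equilibrium_mass}.
Proof.
move=> xG; apply: is_derive1_continuous; apply: is_derive_sum_pred => a Sa.
by apply: is_deriveM; apply: is_deriveV; rewrite gt_eqF ?kappa_gt0.
Qed.

Let rpg_gt0 : 0 < r * p amax * gmax.
Proof. by rewrite !mulr_gt0 ?subr_gt0 ?p_gt0 ?g_gt0. Qed.

Let gmax_lt_l1 : gmax < l1.
Proof. by rewrite /l1 ltrDl; exact: rpg_gt0. Qed.

Let le_l1_l2 : l1 <= l2.
Proof. by rewrite /l2 lerDl divr_ge0 ?subr_ge0 // ltW. Qed.

Let equilibrium_mass_l1 : 1 <= equilibrium_mass l1.
Proof.
rewrite /equilibrium_mass (bigD1 amax) //=.
have -> : equilibrium l1 amax = l1 / gmax.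
  rewrite /equilibrium /kappa -/gmax (_ : l1 - gmax = r * p amax * gmax); last by rewrite /l1; ring.
  by field; rewrite !gt_eqF ?p_gt0.
apply: le_trans (_ : l1 / gmax <= _); first by rewrite ler_pdivlMr // mul1r ltW.
rewrite lerDl; apply: sumr_ge0 => a /andP[Sa _].
rewrite divr_ge0 ?mulr_ge0 ?ltW ?p_gt0 ?kappa_gt0 //; exact: lt_trans gmax_lt_l1.
Qed.

Let equilibrium_mass_l2 : equilibrium_mass l2 <= 1.
Proof.
have l2G : gmax < l2 by apply: lt_le_trans gmax_lt_l1 le_l1_l2.
have l2_gt0 : 0 < l2 by apply: lt_trans l2G.
apply: (@le_trans _ _ (\sum_(a | S a) (r * l2 / (l2 - gmax)) * p a)).
  apply: ler_sum => a Sa.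
  rewrite mulrAC (_ : equilibrium l2 a = r * l2 * p a / kappa l2 a); last first.
    by rewrite /equilibrium [r * p a * l2]mulrAC.
  apply: ler_wpM2l; first by rewrite ltW ?mulr_gt0 ?p_gt0.
  rewrite lef_pV2 ?posrE ?kappa_gt0 ?subr_gt0 //.
  by rewrite lerB ?amax_max.
rewrite -mulr_sumr sum_p mulr1 ler_pdivrMr ?subr_gt0 // mul1r.
have : gmax <= (1 - r) * l2.
  rewrite (_ : (1 - r) * l2 = (1 - r) * l1 + gmax); last first.
    by rewrite /l2; field; rewrite subr_eq0 eq_sym lt_eqF.
  by rewrite lerDr mulr_ge0 ?subr_ge0 ?ltW // (lt_trans gmax_gt0).
lra.
Qed.

Lemma exists_perron_root : exists2 lam, gmax < lam & equilibrium_mass lam = 1.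
Proof.
have cont : {within `[l1, l2], continuous equilibrium_mass}.
  apply: continuous_in_subspaceT => x; rewrite inE /= in_itv /= => /andP[x1 _].
  exact: equilibrium_mass_continuous (lt_le_trans gmax_lt_l1 x1).
have [c /andP[c1 _] c_root] : exists2 c, c \in `[l1, l2] & equilibrium_mass c = 1.
  by apply: IVT => //; rewrite ge_min le_max equilibrium_mass_l1 equilibrium_mass_l2 orbT.
by exists c => //; exact: lt_le_trans gmax_lt_l1 c1.
Qed.
End PerronRoot.

Lemma exists_equilibrium : (exists a, S a) -> exists lam, [/\ 0 < lam,
  forall a, S a -> 0 < kappa lam a, equilibrium_mass lam = 1 &
  \sum_(a | S a) g a * equilibrium lam a = lam].
Proof.
move=> [a0 Sa0]; have [r1|r_neq1] := eqVneq r 1.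
  have equilibriumE lam a : 0 < lam -> equilibrium lam a = p a.
    by move=> lam_gt0; rewrite /equilibrium /kappa r1 subrr mul0r subr0 mul1r mulfK ?gt_eqF.
  have lam_gt0 : 0 < \sum_(a | S a) g a * p a.
    rewrite (bigD1 a0) //= ltr_wpDr ?mulr_gt0 ?g_gt0 ?p_gt0 //.
    by apply: sumr_ge0 => a /andP[Sa _]; rewrite mulr_ge0 ?ltW ?g_gt0 ?p_gt0.
  exists (\sum_(a | S a) g a * p a); split => //.
  - by move=> a _; rewrite /kappa r1 subrr mul0r subr0.
  - by rewrite /equilibrium_mass (eq_bigr _ (fun a _ => equilibriumE _ a lam_gt0)).
  - by apply: eq_bigr => a _; rewrite equilibriumE.
have r_lt1 : r < 1 by rewrite lt_neqAle r_neq1.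
have [amax Samax amax_max] := arg_maxP (fun a => (1 - r) * g a) Sa0.
have [lam gmax_lt mass_lam] := exists_perron_root r_lt1 amax Samax amax_max.
have kappa_gt0 a : S a -> 0 < kappa lam a.
  by move=> Sa; rewrite subr_gt0 (le_lt_trans (amax_max _ Sa)).
have lam_gt0 : 0 < lam by rewrite (lt_trans _ gmax_lt) ?mulr_gt0 ?subr_gt0 ?g_gt0.
exists lam; split => //.
have := sum_kappa_equilibrium lam kappa_gt0.
rewrite /kappa (eq_bigr (fun a => lam * equilibrium lam a - (1 - r) * (g a * equilibrium lam a))); last first.
  by move=> a _; ring.
rewrite sumrB -!mulr_sumr -/(equilibrium_mass lam) mass_lam => /eqP.
set X := \sum_(a | S a) _; rewrite -subr_eq0 (_ : _ - _ = (1 - r) * (lam - X)); last by ring.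
by rewrite mulf_eq0 subr_eq0 eq_sym (negbTE r_neq1) /= subr_eq0 => /eqP.
Qed.

Section Lyapunov.
Variable lam : R.
Hypotheses (lam_gt0 : 0 < lam) (kappa_gt0 : forall a, S a -> 0 < kappa lam a)
  (mass_eta : equilibrium_mass lam = 1) (payoff_eta : payoff (equilibrium lam) = lam).
Local Notation eta := (equilibrium lam).
Local Notation kap := (kappa lam).

Lemma equilibrium_gt0 a : S a -> 0 < eta a.
Proof. by move=> Sa; rewrite divr_gt0 ?kappa_gt0 // !mulr_gt0 ?p_gt0. Qed.

Lemma S_nonempty : exists a, S a.
Proof.
case: (pickP S) => [a Sa|S0]; first by exists a.
by move: mass_eta; rewrite /equilibrium_mass big_pred0 // => /eqP; rewrite eq_sym oner_eq0.
Qed.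

Lemma reduced_field_equilibrium a : S a -> reduced_field eta a = 0.
Proof.
move=> Sa; have := kappa_gt0 _ Sa => k_gt0.
by rewrite /reduced_field payoff_eta /equilibrium /kappa; field; rewrite gt_eqF.
Qed.

Lemma reduced_field_div_eta y a : S a ->
  reduced_field y a / eta a =
  kap a * (payoff y / lam - y a / eta a) + lam * (1 - payoff y / lam) * (y a / eta a).
Proof.
move=> Sa; have := equilibrium_gt0 _ Sa; have := kappa_gt0 _ Sa => k_gt0 e_gt0.
have rp : r * p a = eta a * kap a / lam by rewrite /equilibrium; field; rewrite !gt_eqF.
rewrite /reduced_field rp (_ : (1 - r) * g a = lam - kap a); last by rewrite /kappa; ring.
by field; rewrite !gt_eqF.
Qed.

(* Two probability weights on S: [qweight] averages the ratios y/eta into payoff y / lam, and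
   [wweight] is chosen so that its mean of y/eta has derivative proportional to itself. *)
Definition qweight a := g a * eta a / lam.
Definition wnorm := \sum_(a | S a) g a * eta a / kap a.
Definition wweight a := g a * eta a / kap a / wnorm.
Definition wq_bound := \sum_(a | S a) lam / (kap a * wnorm).

Let term_gt0 a : S a -> 0 < g a * eta a / kap a.
Proof. by move=> Sa; rewrite divr_gt0 ?kappa_gt0 // mulr_gt0 ?g_gt0 ?equilibrium_gt0. Qed.

Lemma wnorm_gt0 : 0 < wnorm.
Proof.
have [a0 Sa0] := S_nonempty.
rewrite /wnorm (bigD1 a0) //= ltr_wpDr ?term_gt0 //.
by apply: sumr_ge0 => a /andP[Sa _]; apply/ltW/term_gt0.
Qed.

Lemma qweight_gt0 a : S a -> 0 < qweight a.
Proof. by move=> Sa; rewrite divr_gt0 // mulr_gt0 ?g_gt0 ?equilibrium_gt0. Qed.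

Lemma wweight_gt0 a : S a -> 0 < wweight a.
Proof. by move=> Sa; rewrite divr_gt0 ?term_gt0 ?wnorm_gt0. Qed.

Lemma sum_qweight : \sum_(a | S a) qweight a = 1.
Proof. by rewrite -mulr_suml -/(payoff eta) payoff_eta divff // gt_eqF. Qed.

Lemma sum_wweight : \sum_(a | S a) wweight a = 1.
Proof. by rewrite -mulr_suml divff // gt_eqF // wnorm_gt0. Qed.

Lemma wq_bound_gt0 : 0 < wq_bound.
Proof.
have [a0 Sa0] := S_nonempty; have := wnorm_gt0 => w_gt0.
rewrite /wq_bound (bigD1 a0) //= ltr_wpDr ?divr_gt0 ?mulr_gt0 ?kappa_gt0 //.
by apply: sumr_ge0 => a /andP[Sa _]; rewrite divr_ge0 ?mulr_ge0 ?ltW ?kappa_gt0.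
Qed.

Lemma wweight_le a : S a -> wweight a <= wq_bound * qweight a.
Proof.
move=> Sa; have := kappa_gt0 _ Sa; have := wnorm_gt0 => w_gt0 k_gt0.
rewrite (_ : wweight a = lam / (kap a * wnorm) * qweight a); last first.
  by rewrite /wweight /qweight; field; rewrite !gt_eqF.
apply: ler_wpM2r; first exact/ltW/qweight_gt0.
rewrite /wq_bound (bigD1 a) //= lerDl.
by apply: sumr_ge0 => b /andP[Sb _]; rewrite divr_ge0 ?mulr_ge0 ?ltW ?kappa_gt0.
Qed.

Lemma wweight_kappa a : S a -> wweight a * kap a = lam / wnorm * qweight a.
Proof.
move=> Sa; have := kappa_gt0 _ Sa; have := wnorm_gt0 => w_gt0 k_gt0.
by rewrite /wweight /qweight; field; rewrite !gt_eqF.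
Qed.

Lemma payoff_div_lam y : payoff y / lam = \sum_(a | S a) qweight a * (y a / eta a).
Proof.
rewrite /payoff mulr_suml; apply: eq_bigr => a Sa; have := equilibrium_gt0 _ Sa => e_gt0.
by rewrite /qweight; field; rewrite !gt_eqF.
Qed.

Lemma sum_wweight_field y :
  \sum_(a | S a) wweight a * (reduced_field y a / eta a) =
  lam * (1 - payoff y / lam) * \sum_(a | S a) wweight a * (y a / eta a).
Proof.
set m := payoff y / lam.
have -> : \sum_(a | S a) wweight a * (reduced_field y a / eta a) =
  \sum_(a | S a) ((lam / wnorm * m) * qweight a - lam / wnorm * (qweight a * (y a / eta a))
     + lam * (1 - m) * (wweight a * (y a / eta a))).
  apply: eq_bigr => a Sa; rewrite reduced_field_div_eta // -/m.
  transitivity (wweight a * kap a * (m - y a / eta a)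
                + lam * (1 - m) * (wweight a * (y a / eta a))); first by ring.
  by rewrite wweight_kappa //; ring.
rewrite big_split /= sumrB -!mulr_sumr sum_qweight -payoff_div_lam -/m; ring.
Qed.

Lemma sum_wweight_sqr_field y :
  \sum_(a | S a) wweight a * (2 * (y a / eta a) * (reduced_field y a / eta a)) =
  2 * lam * (1 - payoff y / lam) * \sum_(a | S a) wweight a * (y a / eta a) ^+ 2
  - 2 * lam / wnorm * \sum_(a | S a) qweight a * (y a / eta a - payoff y / lam) ^+ 2.
Proof.
set m := payoff y / lam.
rewrite sum_weighted_sqr_dev ?sum_qweight // -payoff_div_lam -/m.
have -> : \sum_(a | S a) wweight a * (2 * (y a / eta a) * (reduced_field y a / eta a)) =
  \sum_(a | S a) ((2 * lam / wnorm * m) * (qweight a * (y a / eta a))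
     - 2 * lam / wnorm * (qweight a * (y a / eta a) ^+ 2)
     + 2 * lam * (1 - m) * (wweight a * (y a / eta a) ^+ 2)).
  apply: eq_bigr => a Sa; rewrite reduced_field_div_eta // -/m.
  transitivity (2 * (wweight a * kap a) * (y a / eta a) * (m - y a / eta a)
                + 2 * lam * (1 - m) * (wweight a * (y a / eta a) ^+ 2)); first by ring.
  by rewrite wweight_kappa //; ring.
rewrite big_split /= sumrB -!mulr_sumr -payoff_div_lam -/m; ring.
Qed.

(* The w-variance is at most the w-mean square deviation from [m], and [w <= wq_bound q]. *)
Lemma wvar_le_qvar y :
  \sum_(a | S a) wweight a * (y a / eta a) ^+ 2 - (\sum_(a | S a) wweight a * (y a / eta a)) ^+ 2
  <= wq_bound * \sum_(a | S a) qweight a * (y a / eta a - payoff y / lam) ^+ 2.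
Proof.
set m := payoff y / lam.
have := sum_weighted_sqr_dev _ (fun a => y a / eta a) m sum_wweight.
have : \sum_(a | S a) wweight a * (y a / eta a - m) ^+ 2 <=
       wq_bound * \sum_(a | S a) qweight a * (y a / eta a - m) ^+ 2.
  rewrite mulr_sumr; apply: ler_sum => a Sa; rewrite mulrA.
  by apply: ler_wpM2r; [exact: sqr_ge0 | exact: wweight_le].
set c := \sum_(a | S a) wweight a * (y a / eta a).
by have := sqr_ge0 (c - m); nra.
Qed.

Lemma wmean_sqr_le y :
  (\sum_(a | S a) wweight a * (y a / eta a)) ^+ 2 <= \sum_(a | S a) wweight a * (y a / eta a) ^+ 2.
Proof.
set c := \sum_(a | S a) wweight a * (y a / eta a).
have := sum_weighted_sqr_dev _ (fun a => y a / eta a) c sum_wweight; rewrite -/c.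
have : 0 <= \sum_(a | S a) wweight a * (y a / eta a - c) ^+ 2.
  by apply: sumr_ge0 => a Sa; rewrite mulr_ge0 ?sqr_ge0 // ltW // wweight_gt0.
nra.
Qed.

Lemma sum_wweight_rel_dev y (c : R) : c != 0 ->
  \sum_(a | S a) wweight a * (y a / eta a / c - 1) ^+ 2 =
  (\sum_(a | S a) wweight a * (y a / eta a) ^+ 2) / c ^+ 2
  - 2 * (\sum_(a | S a) wweight a * (y a / eta a)) / c + 1.
Proof.
move=> c0; rewrite (sum_weighted_sqr_dev _ (fun a => y a / eta a / c) 1 sum_wweight) /=.
rewrite expr1n mulr1 -mulrA !mulr_suml; congr (_ - 2 * _ + _).
  by apply: eq_bigr => a _; rewrite expr_div_n mulrA.
by apply: eq_bigr => a _; rewrite mulrA.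
Qed.

Section Trajectory.
Variable y : R -> I -> R.
Hypotheses (y0_ge0 : forall a, S a -> 0 <= y 0 a) (y0_mass : \sum_(a | S a) y 0 a = 1)
  (y_field : forall t : R, 0 <= t -> forall a, S a ->
     is_derive t 1 (fun s => y s a) (reduced_field (y t) a)).

Definition wmean (t : R) := \sum_(a | S a) wweight a * (y t a / eta a).
Definition wsqmean (t : R) := \sum_(a | S a) wweight a * (y t a / eta a) ^+ 2.
Definition qmean (t : R) := payoff (y t) / lam.
Definition qvar (t : R) := \sum_(a | S a) qweight a * (y t a / eta a - qmean t) ^+ 2.
Definition mass (t : R) := \sum_(a | S a) y t a.

Lemma is_derive_ratio {t : R} {a : I} : 0 <= t -> S a ->
  is_derive t 1 (fun s => y s a / eta a) (reduced_field (y t) a / eta a).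
Proof.
move=> t0 Sa; have := is_derive_mulr (y_field _ t0 _ Sa) (is_derive_cst (eta a)^-1 t 1).
by rewrite mulr0 add0r mulrC.
Qed.

Lemma is_derive_wmean {t : R} : 0 <= t -> is_derive t 1 wmean (lam * (1 - qmean t) * wmean t).
Proof.
move=> t0; apply: is_derive_eq (sum_wweight_field (y t)).
apply: is_derive_sum_pred => a Sa; exact: is_derive_mulrl _ (is_derive_ratio t0 Sa).
Qed.

Lemma is_derive_wsqmean {t : R} : 0 <= t ->
  is_derive t 1 wsqmean (2 * lam * (1 - qmean t) * wsqmean t - 2 * lam / wnorm * qvar t).
Proof.
move=> t0; rewrite -sum_wweight_sqr_field; apply: is_derive_sum_pred => a Sa.
exact: is_derive_mulrl _ (is_derive_sqr (is_derive_ratio t0 Sa)).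
Qed.

Lemma qmean_continuous {t : R} : 0 <= t -> {for t, continuous qmean}.
Proof.
move=> t0; have qmeanE : qmean = fun s => \sum_(a | S a) qweight a * (y s a / eta a).
  by apply/funext => s; rewrite /qmean payoff_div_lam.
rewrite qmeanE; apply: (@is_derive1_continuous _ _ _ (\sum_(a | S a) qweight a * (reduced_field (y t) a / eta a))).
apply: is_derive_sum_pred => a Sa; exact: is_derive_mulrl _ (is_derive_ratio t0 Sa).
Qed.

Lemma is_derive_mass {t : R} : 0 <= t -> is_derive t 1 mass (payoff (y t) * (1 - mass t)).
Proof.
move=> t0; rewrite -sum_reduced_field; apply: is_derive_sum_pred => a Sa.
exact: y_field.
Qed.

Lemma wmean0_gt0 : 0 < wmean 0.
Proof.
have term_ge0 a : S a -> 0 <= wweight a * (y 0 a / eta a).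
  move=> Sa; rewrite mulr_ge0 ?(ltW (wweight_gt0 _ Sa)) //.
  by rewrite divr_ge0 ?y0_ge0 ?(ltW (equilibrium_gt0 _ Sa)).
rewrite lt_def sumr_ge0 // andbT; apply/eqP => /(psumr_eq0P term_ge0) wmean0.
move: y0_mass; rewrite big1 => [/eqP|a Sa]; first by rewrite eq_sym oner_eq0.
move: (wmean0 a Sa) => /eqP; rewrite mulf_eq0 (gt_eqF (wweight_gt0 _ Sa)) /=.
by rewrite mulf_eq0 invr_eq0 (gt_eqF (equilibrium_gt0 _ Sa)) orbF => /eqP.
Qed.

(* wmean solves the linear equation c' = lam (1 - qmean) c, hence never vanishes. *)
Lemma wmean_neq0 {t : R} : 0 <= t -> wmean t != 0.
Proof.
apply: (@is_derive_linear_neq0 _ wmean (fun s => lam * (1 - qmean s))) => //.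
- by move=> s s0; apply: is_derive_wmean.
- move=> s s0; apply: continuousM; first exact: cst_continuous.
  by apply: continuousB; [exact: cst_continuous | exact: qmean_continuous].
- by rewrite gt_eqF // wmean0_gt0.
Qed.

(* (mass - 1) e^{lam t} / wmean has derivative 0, since mass' = lam qmean (1 - mass). *)
Lemma mass_eq1 {t : R} : 0 <= t -> mass t = 1.
Proof.
move=> t0.
have : (mass t - 1) * expR (lam * t) / wmean t = (mass 0 - 1) * expR (lam * 0) / wmean 0.
  apply: (@is_derive0_cst_ge0 _ (fun s => (mass s - 1) * expR (lam * s) / wmean s) (fun _ => 0)) => // s s0.
  have c0 := wmean_neq0 s0; apply: is_derive_eq.
    have mass1_df : is_derive s 1 (fun r => mass r - 1) (payoff (y s) * (1 - mass s)).
      exact: is_derive_eq (is_deriveB (is_derive_mass s0) (is_derive_cst (1 : R) s 1)) (subr0 _).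
    exact: is_derive_mulr (is_derive_mulr mass1_df (is_derive_expRM lam s))
                          (is_derive_invr (is_derive_wmean s0) c0).
  by rewrite /qmean /=; field; rewrite c0 gt_eqF.
rewrite {2}/mass y0_mass subrr !mul0r => /eqP.
rewrite !mulf_eq0 invr_eq0 (negbTE (wmean_neq0 t0)) (gt_eqF (expR_gt0 _)) !orbF.
by rewrite subr_eq0 => /eqP.
Qed.

Definition lyap (t : R) := wsqmean t / wmean t ^+ 2 - 1.

Lemma is_derive_lyap {t : R} : 0 <= t ->
  is_derive t 1 lyap (- (2 * lam / wnorm) * qvar t / wmean t ^+ 2).
Proof.
move=> t0; have c0 := wmean_neq0 t0; have c2 : wmean t ^+ 2 != 0 by rewrite expf_neq0.
have ratio_df := is_derive_mulr (is_derive_wsqmean t0)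
  (is_derive_invr (is_derive_sqr (is_derive_wmean t0)) c2).
apply: (is_derive_eq (is_deriveB ratio_df (is_derive_cst (1 : R) t 1))).
by rewrite subr0 /=; field; rewrite c0 gt_eqF ?wnorm_gt0.
Qed.

Definition decay_rate := 2 * lam / (wnorm * wq_bound).

Lemma lyap_decay {t : R} : 0 <= t -> lyap t * expR (decay_rate * t) <= lyap 0.
Proof.
apply: is_derive_exp_decay => [s s0|s s0]; first exact: is_derive_lyap.
have c0 := wmean_neq0 s0; have w_gt0 := wnorm_gt0; have b_gt0 := wq_bound_gt0.
have lyap_le : lyap s <= wq_bound * qvar s / wmean s ^+ 2.
  rewrite (_ : lyap s = (wsqmean s - wmean s ^+ 2) / wmean s ^+ 2); last by rewrite /lyap; field.
  by apply: ler_wpM2r; [rewrite invr_ge0 sqr_ge0 | exact: wvar_le_qvar].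
rewrite (_ : - (2 * lam / wnorm) * qvar s / wmean s ^+ 2
           = - decay_rate * (wq_bound * qvar s / wmean s ^+ 2)); last first.
  by rewrite /decay_rate; field; rewrite c0 !gt_eqF.
by rewrite !mulNr lerN2 ler_wpM2l // ltW // /decay_rate !divr_gt0 ?mulr_gt0.
Qed.

Definition rel_dev a (t : R) := y t a / eta a / wmean t - 1.

Lemma rel_dev_sqr_le a {t : R} : S a -> 0 <= t -> wweight a * rel_dev a t ^+ 2 <= lyap t.
Proof.
move=> Sa t0; have c0 := wmean_neq0 t0.
rewrite (_ : lyap t = \sum_(b | S b) wweight b * rel_dev b t ^+ 2); last first.
  by rewrite sum_wweight_rel_dev // -/(wsqmean t) -/(wmean t) /lyap; field; rewrite c0.
rewrite (bigD1 a) //= lerDl; apply: sumr_ge0 => b /andP[Sb _].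
by rewrite mulr_ge0 ?sqr_ge0 ?ltW ?wweight_gt0.
Qed.

Lemma rel_dev_cvg0 a : S a -> rel_dev a t @[t --> +oo] --> 0.
Proof.
move=> Sa; have w_gt0 := wweight_gt0 _ Sa.
apply: (@cvg0_sqr_expR_bounded _ _ decay_rate (lyap 0 / wweight a)).
  by rewrite /decay_rate !divr_gt0 ?mulr_gt0 ?wnorm_gt0 ?wq_bound_gt0.
move=> t t0; rewrite ler_pdivlMr //; apply: le_trans (lyap_decay t0).
by rewrite mulrAC; apply: ler_wpM2r; [exact: expR_ge0 | rewrite mulrC rel_dev_sqr_le].
Qed.

(* With mass 1 and y = eta wmean (1 + rel_dev), wmean is the inverse of a sum tending to 1. *)
Lemma trajectory_cvg a : S a -> y t a @[t --> +oo] --> eta a.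
Proof.
move=> Sa; pose D s := \sum_(b | S b) eta b * (1 + rel_dev b s).
have term_cvg b : S b -> eta b * (1 + rel_dev b s) @[s --> +oo] --> eta b.
  move=> Sb; have : eta b * (1 + rel_dev b s) @[s --> +oo] --> eta b * (1 + 0).
    by apply: cvgMl_tmp; apply: cvgD; [exact: cvg_cst | exact: rel_dev_cvg0].
  by rewrite addr0 mulr1.
have D_cvg : D s @[s --> +oo] --> (1 : R).
  rewrite -mass_eta; apply: cvg_big => //; first exact: add_continuous.
apply: cvg_trans (_ : eta a * (1 + rel_dev a s) / D s @[s --> +oo] --> eta a).
  apply: near_eq_cvg; near=> t.
  have t0 : 0 <= t by near: t; apply: nbhs_pinfty_ge; exact: num_real.
  have c0 := wmean_neq0 t0.
  have yE b : S b -> y t b = eta b * wmean t * (1 + rel_dev b t).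
    by move=> Sb; rewrite /rel_dev; field; rewrite c0 gt_eqF ?equilibrium_gt0.
  have cD : wmean t * D t = 1.
    rewrite -(mass_eq1 t0) /mass /D mulr_sumr; apply: eq_bigr => b Sb.
    by rewrite yE // mulrCA mulrA.
  have D0 : D t != 0.
    by apply/eqP => D0; move: cD; rewrite D0 mulr0 => /eqP; rewrite eq_sym oner_eq0.
  have cE : wmean t = (D t)^-1 by apply: (mulIf D0); rewrite mulVf.
  by rewrite yE // cE mulrAC.
have := cvgM (term_cvg a Sa) (cvgV (oner_neq0 R) D_cvg).
by rewrite invr1 mulr1; apply.
Unshelve. all: end_near.
Qed.

End Trajectory.

End Lyapunov.

Theorem reduced_dynamics_globally_stable : (exists a, S a) ->
  exists eta : I -> R,
    [/\ (forall a, S a -> 0 <= eta a) /\ \sum_(a | S a) eta a = 1,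
        (forall a, S a -> reduced_field eta a = 0) &
        (forall y : R -> I -> R,
           (forall a, S a -> 0 <= y 0 a) -> \sum_(a | S a) y 0 a = 1 ->
           (forall t : R, 0 <= t -> forall a, S a ->
              is_derive t 1 (fun s => y s a) (reduced_field (y t) a)) ->
           forall a, S a -> y t a @[t --> +oo] --> eta a)].
Proof.
move=> S_ne; have [lam [lam_gt0 kappa_gt0 mass_eta payoff_eta]] := exists_equilibrium S_ne.
exists (equilibrium lam); split.
- by split=> // a Sa; apply/ltW/equilibrium_gt0.
- exact: reduced_field_equilibrium.
- by move=> y y0_ge0 y0_mass y_field a Sa; apply: trajectory_cvg.
Qed.

End ReducedDynamics.

(** * Populations and partner supports *)

Lemma prodr_gt0_factor (R : realType) (J : finType) (P : pred J) (F : J -> R) :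
  (forall j, 0 <= F j) -> 0 < \prod_(j | P j) F j -> forall j, P j -> 0 < F j.
Proof.
move=> F_ge0 prod_gt0 j Pj; rewrite lt_def F_ge0 andbT; apply/eqP => Fj0.
by move: prod_gt0; rewrite (bigD1 j) //= Fj0 mul0r ltxx.
Qed.

Section Population.
Context {R : realType} {nD : nat} {A : 'I_nD -> finType}.

(* [b0] is only a default value for the inverse of the tagging bijection. *)
Lemma prod_sum_dffun (b0 : Ty A) (G : forall d, A d -> R) :
  \prod_(d : 'I_nD) \sum_(x : A d) G d x = \sum_(a : Ty A) \prod_(d : 'I_nD) G d (a d).
Proof.
pose J := {d : 'I_nD & A d}.
have sum_tagged d : \sum_(x : A d) G d x = \sum_(j : J | tag j == d) G (tag j) (tagged j).
  transitivity (\sum_(d' | d' == d) \sum_(x : A d') G d' x); first by rewrite big_pred1_eq.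
  by rewrite (sig_big_dep (fun d' => d' == d) (fun _ _ => true) G); apply: eq_bigl => j; rewrite andbT.
rewrite (eq_bigr _ (fun d _ => sum_tagged d)).
rewrite (bigA_distr_big_dep (fun d (j : J) => tag j == d) (fun d j => G (tag j) (tagged j))).
pose tag_all (a : Ty A) : {ffun 'I_nD -> J} := [ffun d => Tagged A (a d)].
pose untag_all (f : {ffun 'I_nD -> J}) : Ty A := [ffun d => tagged_as (Tagged A (b0 d)) (f d)].
rewrite (reindex tag_all).
  apply: eq_big => a; first by apply/familyP => d; rewrite ffunE unfold_in /= eqxx.
  by move=> _; apply: eq_bigr => d _; rewrite ffunE.
exists untag_all; first by move=> a _; apply/ffunP => d; rewrite !ffunE tagged_asE.
move=> f; rewrite unfold_in /= => /familyP f_tag; apply/ffunP => d; rewrite !ffunE.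
move: (f_tag d); rewrite unfold_in; case: (f d) => j x /= /eqP j_d; subst j.
by rewrite tagged_asE.
Qed.

Definition set_trait (b : Ty A) (d : 'I_nD) (x : A d) : Ty A :=
  [ffun d' => match d =P d' return A d' with
              | ReflectT e => eq_rect d A x d' e
              | ReflectF _ => b d' end].

Lemma set_trait_id (b : Ty A) (d : 'I_nD) (x : A d) : set_trait b d x d = x.
Proof. by rewrite /set_trait ffunE; case: eqP => // e; rewrite (eq_axiomK e). Qed.

Lemma set_trait_ne (b : Ty A) (d d' : 'I_nD) (x : A d) : d' != d -> set_trait b d x d' = b d'.
Proof. by move=> ne; rewrite /set_trait ffunE; case: eqP => // e; rewrite e eqxx in ne. Qed.

Lemma sameoff_set_traitr (b : Ty A) (d : 'I_nD) (x : A d) : sameoff d b (set_trait b d x).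
Proof. by apply/forallP => d'; apply/implyP => ne; rewrite set_trait_ne. Qed.

Lemma sameoff_set_traitl (b : Ty A) (d : 'I_nD) (x : A d) : sameoff d (set_trait b d x) b.
Proof. by apply/forallP => d'; apply/implyP => ne; rewrite set_trait_ne. Qed.

Context {xs : Ty A -> R}.
Hypotheses (xs_ge0 : forall a, 0 <= xs a) (sum_xs : \sum_a xs a = 1).

Lemma margT_ge0 (d : 'I_nD) (x : A d) : 0 <= margT xs d x.
Proof. exact: sumr_ge0. Qed.

Lemma le_margT (d : 'I_nD) (a : Ty A) : xs a <= margT xs d (a d).
Proof. by rewrite /margT (bigD1 a) //= lerDl sumr_ge0. Qed.

Lemma le_margP {d : 'I_nD} {a a' : Ty A} : sameoff d a a' -> xs a' <= margP xs d a.
Proof. by move=> same; rewrite /margP (bigD1 a') //= lerDl sumr_ge0. Qed.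

Lemma sum_margT (d : 'I_nD) : \sum_(x : A d) margT xs d x = 1.
Proof. by rewrite -sum_xs (partition_big (fun a : Ty A => a d) xpredT). Qed.

Lemma margP_gt0_sameoff (d : 'I_nD) (a : Ty A) :
  0 < margP xs d a -> exists2 a', sameoff d a a' & 0 < xs a'.
Proof.
move=> margP_gt0; apply/exists_inP; apply: contraTT margP_gt0 => /exists_inPn xs_le0.
by rewrite -leNgt; apply: sumr_le0 => a' same; rewrite leNgt xs_le0.
Qed.

Lemma exists_xs_gt0 : exists b, 0 < xs b.
Proof.
case/boolP: [exists b, 0 < xs b] => [/existsP //| /existsPn xs_le0].
suff : \sum_a xs a <= 0 by rewrite sum_xs ler10.
by apply: sumr_le0 => b _; rewrite leNgt xs_le0.
Qed.

Lemma sum_prodoff (d : 'I_nD) (ad : A d) : \sum_(a : Ty A | a d == ad) prodoff xs d a = 1.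
Proof.
have [b0 _] := exists_xs_gt0.
pose G (d' : 'I_nD) (x : A d') : R :=
  if d' == d then (Tagged A x == Tagged A ad)%:R else margT xs d' x.
have prodG : \prod_(d' : 'I_nD) \sum_(x : A d') G d' x = 1.
  rewrite (bigD1 d) //=.
  have -> : \prod_(d' | d' != d) \sum_x G d' x = 1.
    by apply: big1 => d' ne; rewrite /G (negbTE ne) sum_margT.
  rewrite mulr1 /G eqxx (eq_bigr (fun x => (x == ad)%:R)) => [|x _]; last by rewrite eq_Tagged.
  by rewrite (bigD1 ad) //= eqxx big1 ?addr0 // => x /negbTE ->.
rewrite -prodG prod_sum_dffun // big_mkcond /=; apply: eq_bigr => a _.
rewrite [RHS](bigD1 d) //= {1}/G eqxx eq_Tagged /=.
have -> : \prod_(d' | d' != d) G d' (a d') = prodoff xs d a.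
  by apply: eq_bigr => d' ne; rewrite /G (negbTE ne).
by case: (a d == ad); rewrite ?mul1r ?mul0r.
Qed.

Lemma prodoff_gt0 {d : 'I_nD} {ad : A d} (a : Ty A) :
  partner_supp xs d ad a -> 0 < prodoff xs d a.
Proof.
case/andP => _ /margP_gt0_sameoff [a' same xa_gt0].
apply: prodr_gt0 => d' ne; apply: lt_le_trans xa_gt0 _.
by move/forallP: same => /(_ d'); rewrite ne => /eqP ->; exact: le_margT.
Qed.

Lemma partner_supp_nonempty (d : 'I_nD) (ad : A d) : exists a, partner_supp xs d ad a.
Proof.
have [b0 b0_gt0] := exists_xs_gt0.
exists (set_trait b0 d ad); rewrite /partner_supp set_trait_id eqxx /=.
exact: lt_le_trans b0_gt0 (le_margP (sameoff_set_traitl _ _ _)).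
Qed.

End Population.

Lemma coef_eq_of_simplexOn {R : realType} {nD : nat} {A : 'I_nD -> finType}
  {S : pred (Ty A)} {c1 c2 : Ty A -> R} :
  (forall y, simplexOn S y -> \sum_(a | S a) c1 a * y a = \sum_(a | S a) c2 a * y a) ->
  forall a, S a -> c1 a = c2 a.
Proof.
move=> eq_on a Sa.
have sum_delta (c : Ty A -> R) : \sum_(b | S b) c b * (b == a)%:R = c a.
  by rewrite (bigD1 a) //= eqxx mulr1 big1 ?addr0 // => b /andP[_ /negbTE ->]; rewrite mulr0.
have delta_simplex : simplexOn S (fun b => (b == a)%:R : R).
  split=> [b _|]; first exact: ler0n.
  by rewrite (bigD1 a) //= eqxx big1 ?addr0 // => b /andP[_ /negbTE ->].
by have := eq_on _ delta_simplex; rewrite !sum_delta.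
Qed.

Lemma partner_field_reduced {R : realType} {nD : nat} {A : 'I_nD -> finType}
  (r : R) {g1 f2 : Ty A -> (Ty A -> R) -> R} {xs : Ty A -> R} {d : 'I_nD} {ad : A d} :
  (forall y, v_y f2 xs d ad y = u_y g1 xs d ad y) ->
  forall y a, partner_field r g1 f2 xs d ad y a =
              reduced_field (partner_supp xs d ad) (fun b => g1 b xs) (prodoff xs d) r y a.
Proof. by move=> v_eq_u y a; rewrite /partner_field /U_y v_eq_u /u_y /reduced_field /payoff; ring. Qed.

Section StationarySupport.
Context {R : realType} {nD : nat} {A : 'I_nD -> finType}.
Context {r : R} {g1 f2 : Ty A -> (Ty A -> R) -> R} {xs : Ty A -> R} {d : 'I_nD} {ad : A d}.
Hypotheses (r_gt0 : 0 < r) (r_le1 : r <= 1) (xs_stat : stationary r g1 f2 xs)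
  (g1_gt0 : forall a, 0 < g1 a xs)
  (f2_comb : forall a : Ty A, 0 < \prod_(d' : 'I_nD) margT xs d' (a d') -> 0 < f2 a xs).
Local Notation S := (partner_supp xs d ad).

Let xs_ge0 : forall a, 0 <= xs a := xs_stat.1.1.
Let sum_xs : \sum_a xs a = 1 := xs_stat.1.2.

Lemma stationary_gt0 (a : Ty A) : 0 < f2 a xs -> 0 < xs a.
Proof.
move=> f2_gt0; have /eqP := xs_stat.2 a; rewrite subr_eq0 => /eqP <-.
apply: ltr_wpDl; last by rewrite mulr_gt0.
by rewrite mulr_ge0 ?subr_ge0 // mulr_ge0 ?xs_ge0 ?ltW.
Qed.

(* A profile whose traits all occur is realised: complete it by a trait present at locus d. *)
Lemma partner_supp_prodoff (a : Ty A) : a d = ad -> 0 < prodoff xs d a -> S a.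
Proof.
move=> a_d prod_gt0; have [b0 b0_gt0] := exists_xs_gt0 sum_xs.
have : 0 < xs (set_trait a d (b0 d)).
  apply/stationary_gt0/f2_comb/prodr_gt0 => d' _; have [->|ne] := eqVneq d' d.
    by rewrite set_trait_id (lt_le_trans b0_gt0) // le_margT.
  rewrite set_trait_ne //; apply: prodr_gt0_factor prod_gt0 _ ne.
  by move=> j; exact: margT_ge0 xs_ge0 j (a j).
move=> xa_gt0; rewrite /partner_supp a_d eqxx /=.
exact: lt_le_trans xa_gt0 (le_margP xs_ge0 (sameoff_set_traitr _ _ _)).
Qed.

Lemma sum_prodoff_partner_supp : \sum_(a | S a) prodoff xs d a = 1.
Proof.
rewrite -(sum_prodoff sum_xs d ad) [RHS](bigID S) /= [X in _ = _ + X]big1 ?addr0.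
  by apply: eq_bigl => a; rewrite /partner_supp; case: (a d == ad).
move=> a /andP[/eqP a_d notS]; apply/eqP; rewrite eq_le prodr_ge0 ?andbT => [|d' _].
  by rewrite leNgt; apply: contra notS; exact: partner_supp_prodoff.
exact: margT_ge0 xs_ge0 d' (a d').
Qed.

End StationarySupport.

Local Close Scope classical_set_scope.

Theorem mainTheorem15 (R : realType) (nD : nat) (A : 'I_nD -> finType)
  (hD : (2 <= nD)%N)
  (u : Ty A -> Ty A -> R) (hu : forall a a', 0 < u a a')
  (r : R) (hr : 0 < r <= 1)
  (g1 f2 : Ty A -> (Ty A -> R) -> R)
  (hg1 : f1_cond u g1) (hf2 : f2_cond u f2)
  (hg1pos : forall x, simplex x -> forall a, 0 < g1 a x)
  (xs : Ty A -> R) (hxs : stationary r g1 f2 xs)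
  (hvu : forall (d : 'I_nD) (ad : A d), margT xs d ad = 0 ->
     forall y : Ty A -> R, simplexOn (partner_supp xs d ad) y ->
       v_y f2 xs d ad y = u_y g1 xs d ad y) :
  forall (d : 'I_nD) (ad : A d), margT xs d ad = 0 ->
    unique_globally_stable r g1 f2 xs d ad.
Proof.
move=> d ad margT0; case/andP: hr => r_gt0 r_le1; have [[xs_ge0 sum_xs] _] := hxs.
have g1_gt0 a : 0 < g1 a xs := hg1pos xs hxs.1 a.
have [_ _ _ f2_comb _] := hf2; have {}f2_comb a := f2_comb xs hxs.1 a.
have vpt_g1 := coef_eq_of_simplexOn (c1 := vpt f2 xs d) (c2 := g1^~ xs) (hvu d ad margT0).
have v_eq_u y : v_y f2 xs d ad y = u_y g1 xs d ad y by apply: eq_bigr => a /vpt_g1 ->.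
have field_eq := partner_field_reduced r v_eq_u.
have [eta [eta_simplex eta_eq eta_stable]] := reduced_dynamics_globally_stable _ _ _ _
  r_gt0 r_le1 (fun a _ => g1_gt0 a) (prodoff_gt0 xs_ge0)
  (sum_prodoff_partner_supp r_gt0 r_le1 hxs g1_gt0 f2_comb) (partner_supp_nonempty xs_ge0 sum_xs d ad).
exists eta; split => // [a Sa|y [y0_ge0 y0_mass] y_sol a Sa].
- by rewrite field_eq eta_eq.
- apply: (eta_stable y y0_ge0 y0_mass) Sa => t t0 b Sb.
  by rewrite -field_eq; exact: y_sol.
Qed.
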